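(* Let $a,\varepsilon\in\mathbb{R}$ with $\frac{|a|}{\sqrt2}<\varepsilon<|a|$ or $-|a|<\varepsilon<-\frac{|a|}{\sqrt2}$. Let $X_-(x,y,z)=(y,\,-ay+x+az+\varepsilon,\,x)$, $X_+(x,y,z)=(y,\,-ay-x-az+\varepsilon,\,x)$, $P=\left(-\frac{\sqrt{a^2-\varepsilon^2}}{a},\frac{\varepsilon}{a},0\right)$, and let $x_{\alpha_\pm}(t)$ be the solution of $\dot{\mathbf x}=X_\pm(\mathbf x)$ with $x_{\alpha_\pm}(0)=P$. Set $$t_-=\ln\left(\frac{\sqrt{a^2-\varepsilon^2}+\varepsilon}{\varepsilon-\sqrt{a^2-\varepsilon^2}}\right),\qquad t_+=2\arctan\left(\frac{\sqrt{a^2-\varepsilon^2}}{\varepsilon}\right).$$ Then $\|x_{\alpha_-}(t)\|^2<1$ for $0<t<t_-$ and $\|x_{\alpha_+}(t)\|^2>1$ for $0<t<t_+$.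
   Context: $\|\cdot\|$ is the Euclidean norm on $\mathbb{R}^3$. *)

From Stdlib Require Import Reals.
From Coquelicot Require Import Coquelicot.
Open Scope R_scope.

Definition R3 : Type := (R * R * R)%type.

Definition Xminus (a eps : R) (p : R3) : R3 :=
  let '(x, y, z) := p in (y, - a * y + x + a * z + eps, x).

Definition Xplus (a eps : R) (p : R3) : R3 :=
  let '(x, y, z) := p in (y, - a * y - x - a * z + eps, x).

Definition sqnorm3 (p : R3) : R :=
  let '(x, y, z) := p in x ^ 2 + y ^ 2 + z ^ 2.

Definition c1 (p : R3) : R := fst (fst p).
Definition c2 (p : R3) : R := snd (fst p).
Definition c3 (p : R3) : R := snd p.

Definition is_solution (X : R3 -> R3) (p0 : R3) (u : R -> R3) : Prop :=
  u 0 = p0 /\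
  forall t : R,
    is_derive (fun s => c1 (u s)) t (c1 (X (u t))) /\
    is_derive (fun s => c2 (u s)) t (c2 (X (u t))) /\
    is_derive (fun s => c3 (u s)) t (c3 (X (u t))).

Definition Ppt (a eps : R) : R3 :=
  (- sqrt (a ^ 2 - eps ^ 2) / a, eps / a, 0).

Definition tminus (a eps : R) : R :=
  ln ((sqrt (a ^ 2 - eps ^ 2) + eps) / (eps - sqrt (a ^ 2 - eps ^ 2))).

Definition tplus (a eps : R) : R :=
  2 * atan (sqrt (a ^ 2 - eps ^ 2) / eps).

From Pilot Require Import Defs.
From Stdlib Require Import Reals Lra Psatz.
From Coquelicot Require Import Coquelicot.
Open Scope R_scope.

(** Both vector fields have the first integral [y ∓ z - eps/a], which decays like
    [exp (-a t)] and vanishes at [P]. On the plane [y ∓ z = eps/a] the flow of [X_-]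
    is the hyperbolic system [x' = y, y' = x] and the flow of [X_+] the rotation
    [x' = y, y' = -x], and [x^2 + y^2 = 1] at [P]. For [X_-] this gives
    [|u|^2 - 1 = (3 y + eps/a) (y - eps/a)], whose second factor stays negative up to
    time [t_-]; for [X_+] it gives [|u|^2 - 1 = z^2], and [z] has no zero in [(0, t_+)]. *)

(* [auto_derive] treats the unknown functions as opaque; their derivability and
   derivatives are then read off the [is_derive] hypotheses in the context. *)
Ltac auto_derive_from_hyps :=
  auto_derive; [repeat split; eexists; eauto | repeat erewrite is_derive_unique by eauto].

Lemma is_derive_0_const (g : R -> R) :
  (forall t, is_derive g t 0) -> forall t, g t = g 0.
Proof.
  intros Hg t.
  destruct (MVT_cor4 g (fun _ => 0) 0 (Rabs t) (fun c _ => Hg c) t) as [c [Hc _]].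
  - rewrite Rminus_0_r; apply Rle_refl.
  - lra.
Qed.

Lemma linear_ode_solution (f : R -> R) (k : R) :
  (forall t, is_derive f t (k * f t)) -> forall t, f t = f 0 * exp (k * t).
Proof.
  intros Hf t.
  assert (Hg : forall s, is_derive (fun s => f s * exp (- (k * s))) s 0)
    by (intro s; auto_derive_from_hyps; ring).
  pose proof (is_derive_0_const _ Hg t) as E; simpl in E.
  rewrite Rmult_0_r, Ropp_0, exp_0, Rmult_1_r in E.
  rewrite <- E, Rmult_assoc, <- exp_plus.
  replace (- (k * t) + k * t) with 0 by ring.
  rewrite exp_0; ring.
Qed.

Lemma hyperbolic_ode_solution (x y : R -> R) :
  (forall t, is_derive x t (y t)) -> (forall t, is_derive y t (x t)) ->
  forall t, x t + y t = (x 0 + y 0) * exp t /\ x t - y t = (x 0 - y 0) * exp (- t).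
Proof.
  intros Hx Hy t; split.
  - replace (exp t) with (exp (1 * t)) by (f_equal; ring).
    apply (linear_ode_solution (fun s => x s + y s)).
    intro s; auto_derive_from_hyps; ring.
  - replace (exp (- t)) with (exp (-1 * t)) by (f_equal; ring).
    apply (linear_ode_solution (fun s => x s - y s)).
    intro s; auto_derive_from_hyps; ring.
Qed.

Lemma harmonic_ode_solution (x y : R -> R) :
  (forall t, is_derive x t (y t)) -> (forall t, is_derive y t (- x t)) ->
  forall t, x t = x 0 * cos t + y 0 * sin t /\ y t = y 0 * cos t - x 0 * sin t.
Proof.
  intros Hx Hy t.
  assert (Hp : x t * cos t - y t * sin t = x 0).
  { rewrite (is_derive_0_const (fun s => x s * cos s - y s * sin s)), cos_0, sin_0.
    - ring.
    - intro s; auto_derive_from_hyps; ring. }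
  assert (Hq : x t * sin t + y t * cos t = y 0).
  { rewrite (is_derive_0_const (fun s => x s * sin s + y s * cos s)), cos_0, sin_0.
    - ring.
    - intro s; auto_derive_from_hyps; ring. }
  pose proof (sin2_cos2 t) as Hsc; unfold Rsqr in Hsc.
  rewrite <- Hp, <- Hq; split.
  - transitivity (x t * (sin t * sin t + cos t * cos t)); [rewrite Hsc | ]; ring.
  - transitivity (y t * (sin t * sin t + cos t * cos t)); [rewrite Hsc | ]; ring.
Qed.

Lemma ln_pos_inv (r : R) : 0 < ln r -> 1 < r.
Proof.
  intro Hr.
  destruct (Rlt_dec 0 r) as [Hr0 | Hr0].
  - apply ln_lt_inv; [lra | exact Hr0 | now rewrite ln_1].
  - unfold ln in Hr; destruct (Rlt_dec 0 r); [contradiction | lra].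
Qed.

Lemma atan_pos_inv (x : R) : 0 < atan x -> 0 < x.
Proof.
  intro Hx.
  destruct (Rtotal_order x 0) as [Hneg | [Hzero | Hpos]]; [| | exact Hpos].
  - pose proof (atan_increasing _ _ Hneg); rewrite atan_0 in *; lra.
  - subst; rewrite atan_0 in Hx; lra.
Qed.

(* Relies on [s / 0 = 0]. *)
Lemma div_pos_inv (s e : R) : 0 < s -> 0 < s / e -> 0 < e.
Proof.
  intros Hs Hse.
  destruct (Rtotal_order e 0) as [Hneg | [Hzero | Hpos]]; [| | exact Hpos].
  - enough (s / e < 0) by lra.
    apply Rmult_pos_neg; [exact Hs | now apply Rinv_lt_0_compat].
  - subst; unfold Rdiv in Hse; rewrite Rinv_0, Rmult_0_r in Hse; lra.
Qed.

Lemma lt_of_ratio_gt1 (s e : R) : 0 < s -> 1 < (s + e) / (e - s) -> s < e.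
Proof.
  intros Hs Hr.
  assert (Hd : 0 < e - s).
  { apply (div_pos_inv (s + e)); [| lra].
    destruct (Rle_or_lt (s + e) 0) as [Hn | Hp]; [| exact Hp].
    destruct (Rtotal_order (e - s) 0) as [Hneg | [Hzero | Hpos]]; [| | lra].
    - enough ((s + e) / (e - s) <= 1) by lra.
      apply Rmult_le_reg_r with (- (e - s)); [lra |].
      replace ((s + e) / (e - s) * - (e - s)) with (- (s + e)) by (field; lra).
      lra.
    - rewrite Hzero in Hr; unfold Rdiv in Hr; rewrite Rinv_0, Rmult_0_r in Hr; lra. }
  lra.
Qed.

Lemma exp_combination_lt (s e t : R) :
  0 < s < e -> 0 < t < ln ((s + e) / (e - s)) ->
  (e - s) * exp t + (e + s) * exp (- t) < 2 * e.
Proof.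
  intros [Hs Hse] [Ht Htr].
  assert (Hr : 0 < (s + e) / (e - s)) by (apply Rdiv_lt_0_compat; lra).
  assert (Hu1 : 1 < exp t) by (rewrite <- exp_0; apply exp_increasing; lra).
  assert (Hur : exp t < (s + e) / (e - s))
    by (rewrite <- (exp_ln _ Hr); apply exp_increasing; exact Htr).
  set (u := exp t) in *.
  assert (Hlin : (e - s) * u < s + e).
  { apply Rmult_lt_reg_r with (/ (e - s)); [apply Rinv_0_lt_compat; lra |].
    replace ((e - s) * u * / (e - s)) with u by (field; lra); exact Hur. }
  (* [u ((e - s) u + (e + s) / u - 2 e) = (u - 1) ((e - s) u - (e + s))] *)
  assert (Hfac : (u - 1) * ((e - s) * u - (e + s)) < 0) by nra.
  rewrite exp_Ropp; fold u.
  apply Rmult_lt_reg_r with u; [lra |].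
  replace (((e - s) * u + (e + s) * / u) * u) with ((e - s) * u * u + (e + s))
    by (field; lra).
  nra.
Qed.

Lemma one_sub_cos_lt_sin (e s t : R) :
  0 < e -> 0 < t < 2 * atan (s / e) -> e * (1 - cos t) < s * sin t.
Proof.
  intros He Ht.
  set (h := t / 2).
  assert (Hh : 0 < h < atan (s / e)) by (unfold h; lra).
  pose proof (atan_bound (s / e)).
  assert (Hsin : 0 < sin h) by (apply sin_gt_0; lra).
  assert (Hcos : 0 < cos h) by (apply cos_gt_0; lra).
  assert (Htan : sin h / cos h < s / e).
  { rewrite <- (tan_atan (s / e)); apply tan_increasing; lra. }
  assert (Hhalf : e * sin h < s * cos h).
  { apply Rmult_lt_reg_r with (/ (e * cos h)); [apply Rinv_0_lt_compat; nra |].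
    replace (e * sin h * / (e * cos h)) with (sin h / cos h) by (field; lra).
    replace (s * cos h * / (e * cos h)) with (s / e) by (field; lra).
    exact Htan. }
  replace t with (2 * h) by (unfold h; field).
  rewrite cos_2a_sin, sin_2a.
  nra.
Qed.

Section Flows.

Variables a eps : R.
Hypothesis Hea : eps ^ 2 < a ^ 2.

Let s := sqrt (a ^ 2 - eps ^ 2).

Fact a_neq0 : a <> 0.
Proof. intro Ha; subst; pose proof (pow2_ge_0 eps); simpl in Hea; lra. Qed.

Fact s_pos : 0 < s.
Proof. apply sqrt_lt_R0; lra. Qed.

Fact s_sqr : s ^ 2 = a ^ 2 - eps ^ 2.
Proof. unfold s; rewrite <- Rsqr_pow2; apply Rsqr_sqrt; lra. Qed.

Fact Ppt_on_unit_circle : (- s / a) ^ 2 + (eps / a) ^ 2 = 1.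
Proof.
  pose proof a_neq0; pose proof s_sqr.
  replace ((- s / a) ^ 2 + (eps / a) ^ 2) with ((s ^ 2 + eps ^ 2) / a ^ 2) by (field; auto).
  replace (s ^ 2 + eps ^ 2) with (a ^ 2) by lra.
  field; auto.
Qed.

Section Xminus_flow.

Variable u : R -> R3.
Hypothesis Hu : is_solution (Xminus a eps) (Ppt a eps) u.

Let x t := Defs.c1 (u t).
Let y t := Defs.c2 (u t).
Let z t := Defs.c3 (u t).

Lemma Xminus_components t :
  is_derive x t (y t) /\ is_derive y t (- a * y t + x t + a * z t + eps) /\
  is_derive z t (x t).
Proof.
  pose proof (proj2 Hu t) as H; revert H; unfold x, y, z.
  destruct (u t) as [[p1 p2] p3]; intro H; exact H.
Qed.

Fact Xminus_initial : x 0 = - s / a /\ y 0 = eps / a /\ z 0 = 0.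
Proof. unfold x, y, z; rewrite (proj1 Hu); repeat split. Qed.

Lemma Xminus_first_integral t : z t = y t - eps / a.
Proof.
  pose proof a_neq0; destruct Xminus_initial as (_ & Hy0 & Hz0).
  assert (Hw := linear_ode_solution (fun r => y r - z r - eps / a) (- a)).
  cbv beta in Hw; rewrite Hy0, Hz0 in Hw.
  enough (y t - z t - eps / a = 0) by lra.
  rewrite Hw; [field; auto |].
  intro r; destruct (Xminus_components r) as (Hx & Hy & Hz).
  auto_derive_from_hyps; field; auto.
Qed.

Lemma Xminus_derive_y t : is_derive y t (x t).
Proof.
  destruct (Xminus_components t) as (_ & Hy & _).
  rewrite Xminus_first_integral in Hy.
  replace (x t) with (- a * y t + x t + a * (y t - eps / a) + eps)
    by (field; exact a_neq0).
  exact Hy.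
Qed.

Lemma Xminus_hyperbolic_solution t :
  x t + y t = (x 0 + y 0) * exp t /\ x t - y t = (x 0 - y 0) * exp (- t).
Proof.
  apply hyperbolic_ode_solution; [intro r; apply (Xminus_components r) | exact Xminus_derive_y].
Qed.

Lemma Xminus_y_formula t : 2 * a * y t = (eps - s) * exp t + (eps + s) * exp (- t).
Proof.
  pose proof a_neq0; destruct Xminus_initial as (Hx0 & Hy0 & _).
  destruct (Xminus_hyperbolic_solution t) as [Hsum Hdiff].
  replace (y t) with (((x t + y t) - (x t - y t)) / 2) by field.
  rewrite Hsum, Hdiff, Hx0, Hy0; field; auto.
Qed.

Lemma Xminus_sqnorm_sub1 t :
  a ^ 2 * (sqnorm3 (u t) - 1) = (3 * (a * y t) + eps) * (a * y t - eps).
Proof.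
  pose proof a_neq0; pose proof s_sqr.
  destruct Xminus_initial as (Hx0 & Hy0 & _).
  destruct (Xminus_hyperbolic_solution t) as [Hsum Hdiff].
  assert (Hexp : exp t * exp (- t) = 1)
    by (rewrite <- exp_plus, Rplus_opp_r; apply exp_0).
  assert (Hx2 : x t ^ 2 - y t ^ 2 = x 0 ^ 2 - y 0 ^ 2).
  { replace (x t ^ 2 - y t ^ 2) with ((x t + y t) * (x t - y t)) by ring.
    rewrite Hsum, Hdiff.
    transitivity ((x 0 ^ 2 - y 0 ^ 2) * (exp t * exp (- t))); [ring | rewrite Hexp; ring]. }
  assert (Hax2 : a ^ 2 * x t ^ 2 = a ^ 2 * y t ^ 2 + (s ^ 2 - eps ^ 2)).
  { replace (s ^ 2 - eps ^ 2) with (a ^ 2 * (x 0 ^ 2 - y 0 ^ 2))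
      by (rewrite Hx0, Hy0; field; auto).
    rewrite <- Hx2; ring. }
  replace (sqnorm3 (u t)) with (x t ^ 2 + y t ^ 2 + z t ^ 2)
    by (unfold x, y, z; destruct (u t) as [[p1 p2] p3]; reflexivity).
  rewrite Xminus_first_integral.
  field_simplify_eq; [lra | auto].
Qed.

Lemma Xminus_sqnorm_lt1 t : 0 < t < tminus a eps -> sqnorm3 (u t) < 1.
Proof.
  intro Ht.
  pose proof a_neq0 as Ha; pose proof s_pos as Hs.
  assert (Hse : s < eps).
  { apply lt_of_ratio_gt1; [exact Hs |].
    apply ln_pos_inv; unfold tminus in Ht; fold s in Ht; lra. }
  pose proof (exp_combination_lt s eps t (conj Hs Hse) Ht) as Hlt.
  pose proof (Xminus_y_formula t) as Hy.
  assert (0 < (eps - s) * exp t) by (apply Rmult_lt_0_compat; [lra | apply exp_pos]).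
  assert (0 < (eps + s) * exp (- t)) by (apply Rmult_lt_0_compat; [lra | apply exp_pos]).
  assert (Hneg : (3 * (a * y t) + eps) * (a * y t - eps) < 0)
    by (apply Rmult_pos_neg; lra).
  pose proof (pow2_gt_0 _ Ha).
  pose proof (Xminus_sqnorm_sub1 t).
  nra.
Qed.

End Xminus_flow.

Section Xplus_flow.

Variable u : R -> R3.
Hypothesis Hu : is_solution (Xplus a eps) (Ppt a eps) u.

Let x t := Defs.c1 (u t).
Let y t := Defs.c2 (u t).
Let z t := Defs.c3 (u t).

Lemma Xplus_components t :
  is_derive x t (y t) /\ is_derive y t (- a * y t - x t - a * z t + eps) /\
  is_derive z t (x t).
Proof.
  pose proof (proj2 Hu t) as H; revert H; unfold x, y, z.
  destruct (u t) as [[p1 p2] p3]; intro H; exact H.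
Qed.

Fact Xplus_initial : x 0 = - s / a /\ y 0 = eps / a /\ z 0 = 0.
Proof. unfold x, y, z; rewrite (proj1 Hu); repeat split. Qed.

Lemma Xplus_first_integral t : z t = eps / a - y t.
Proof.
  pose proof a_neq0; destruct Xplus_initial as (_ & Hy0 & Hz0).
  assert (Hw := linear_ode_solution (fun r => y r + z r - eps / a) (- a)).
  cbv beta in Hw; rewrite Hy0, Hz0 in Hw.
  enough (y t + z t - eps / a = 0) by lra.
  rewrite Hw; [field; auto |].
  intro r; destruct (Xplus_components r) as (Hx & Hy & Hz).
  auto_derive_from_hyps; field; auto.
Qed.

Lemma Xplus_derive_y t : is_derive y t (- x t).
Proof.
  destruct (Xplus_components t) as (_ & Hy & _).
  rewrite Xplus_first_integral in Hy.
  replace (- x t) with (- a * y t - x t - a * (eps / a - y t) + eps)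
    by (field; exact a_neq0).
  exact Hy.
Qed.

Lemma Xplus_harmonic_solution t :
  x t = x 0 * cos t + y 0 * sin t /\ y t = y 0 * cos t - x 0 * sin t.
Proof.
  apply harmonic_ode_solution; [intro r; apply (Xplus_components r) | exact Xplus_derive_y].
Qed.

Lemma Xplus_sqnorm_sub1 t : sqnorm3 (u t) - 1 = z t ^ 2.
Proof.
  destruct Xplus_initial as (Hx0 & Hy0 & _).
  destruct (Xplus_harmonic_solution t) as [Hx Hy].
  pose proof (sin2_cos2 t) as Hsc; unfold Rsqr in Hsc.
  assert (Hxy : x t ^ 2 + y t ^ 2 = 1).
  { rewrite <- Ppt_on_unit_circle, <- Hx0, <- Hy0, Hx, Hy.
    transitivity ((x 0 ^ 2 + y 0 ^ 2) * (sin t * sin t + cos t * cos t)); [ring | rewrite Hsc; ring]. }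
  replace (sqnorm3 (u t)) with (x t ^ 2 + y t ^ 2 + z t ^ 2)
    by (unfold x, y, z; destruct (u t) as [[p1 p2] p3]; reflexivity).
  lra.
Qed.

Lemma Xplus_z_formula t : a * z t = eps * (1 - cos t) - s * sin t.
Proof.
  pose proof a_neq0; destruct Xplus_initial as (Hx0 & Hy0 & _).
  rewrite Xplus_first_integral, (proj2 (Xplus_harmonic_solution t)), Hx0, Hy0.
  field; auto.
Qed.

Lemma Xplus_sqnorm_gt1 t : 0 < t < tplus a eps -> sqnorm3 (u t) > 1.
Proof.
  intro Ht.
  pose proof a_neq0 as Ha; pose proof s_pos as Hs.
  assert (He : 0 < eps).
  { apply (div_pos_inv s); [exact Hs |].
    apply atan_pos_inv; unfold tplus in Ht; fold s in Ht; lra. }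
  pose proof (one_sub_cos_lt_sin eps s t He Ht) as Hlt.
  assert (Hz : z t <> 0).
  { intro Hz0; pose proof (Xplus_z_formula t) as Haz.
    rewrite Hz0, Rmult_0_r in Haz; lra. }
  pose proof (Xplus_sqnorm_sub1 t).
  pose proof (pow2_gt_0 _ Hz).
  lra.
Qed.

End Xplus_flow.

End Flows.

Theorem mainTheorem6 (a eps : R)
  (Heps : (Rabs a / sqrt 2 < eps < Rabs a) \/ (- Rabs a < eps < - (Rabs a / sqrt 2)))
  (um up : R -> R3)
  (Hum : is_solution (Xminus a eps) (Ppt a eps) um)
  (Hup : is_solution (Xplus a eps) (Ppt a eps) up) :
  (forall t : R, 0 < t < tminus a eps -> sqnorm3 (um t) < 1) /\
  (forall t : R, 0 < t < tplus a eps -> sqnorm3 (up t) > 1).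
Proof.
  assert (Hea : eps ^ 2 < a ^ 2).
  { assert (0 <= Rabs a / sqrt 2)
      by (apply Rdiv_le_0_compat; [apply Rabs_pos | apply sqrt_lt_R0; lra]).
    rewrite <- (pow2_abs a); destruct Heps; nra. }
  split.
  - exact (Xminus_sqnorm_lt1 a eps Hea um Hum).
  - exact (Xplus_sqnorm_gt1 a eps Hea up Hup).
Qed.
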